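(* Let $G$ be a graph on $n$ vertices. For any integer $c\ge 2$, there are at most $\frac{2n}{c}$ bridges of $G$ both of whose endpoints have degree larger than $c$.
   Context: A bridge is an edge whose deletion increases the number of connected components of the graph. *)

From mathcomp Require Import all_boot all_order all_algebra.
Set Implicit Arguments. Unset Strict Implicit. Unset Printing Implicit Defensive.

(* A finite simple graph on vertex type T : finType is given by an adjacency
   relation e : rel T that is symmetric and irreflexive (see the theorem). *)

Definition ncomp (T : finType) (e : rel T) : nat :=
  #|[set [set y | connect e x y] | x : T]|.

Definition del_edge (T : finType) (e : rel T) (x y : T) : rel T :=
  fun u v => e u v && ([set u; v] != [set x; y]).

Definition deg (T : finType) (e : rel T) (x : T) : nat := #|[set y | e x y]|.

Definition is_bridge (T : finType) (e : rel T) (x y : T) : bool :=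
  e x y && (ncomp e < ncomp (del_edge e x y)).

Definition big_bridges (T : finType) (e : rel T) (c : nat) : {set {set T}} :=
  [set S : {set T} | [exists x : T, exists y : T,
     [&& S == [set x; y], is_bridge e x y, c < deg e x & c < deg e y]]].

From mathcomp Require Import all_boot all_order all_algebra zify.
Import Order.TTheory GRing.Theory Num.Theory.
Set Implicit Arguments. Unset Strict Implicit. Unset Printing Implicit Defensive.

(* Delete the set B of big bridges, leaving a graph H. Each deleted bridge
   separates its two endpoints, so at least |B| components of H contain an
   endpoint of a big bridge. In such a component C, an endpoint w lying on
   k >= 1 big bridges has more than c neighbours, all inside C except at most
   k, so c + 2 <= |C| + k; hence 4c <= 4|C| + c D_C, where D_C counts the
   incidences between C and B. Summing over these components, the |C| add up
   to at most n and the D_C to at most 2|B|, so 4c|B| <= 4n + 2c|B|. *)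

Section Components.
Variable T : finType.
Implicit Types (U : {set T}) (r : rel T).

Definition components U r : {set {set T}} := [set [set y | connect r x y] | x in U].

Definition saturate r (S : {set T}) : {set T} :=
  [set y | [exists s in S, connect r s y]].

Lemma saturate_class r (r' : rel T) x : subrel r' r ->
  saturate r [set y | connect r' x y] = [set y | connect r x y].
Proof.
move=> sub_r'r; apply/setP => y; rewrite !inE.
apply/existsP/idP => [[s /andP[]] | xy]; last by exists x; rewrite inE connect0.
rewrite inE => /(connect_sub (e := r')) xs sy; apply: connect_trans sy.
by apply: xs => u v /sub_r'r; apply: connect1.
Qed.

Lemma components_subrel U r (r' : rel T) : subrel r' r ->
  components U r = saturate r @: components U r'.
Proof.
by move=> sub_r'r; rewrite -imset_comp; apply: eq_imset => x /=; rewrite saturate_class.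
Qed.

Lemma leq_card_components U r (r' : rel T) :
  subrel r' r -> #|components U r| <= #|components U r'|.
Proof. by move=> /(components_subrel U) ->; apply: leq_imset_card. Qed.

Lemma ltn_card_components U r (r' : rel T) x y :
  connect_sym r -> subrel r' r -> x \in U -> y \in U ->
  connect r x y -> ~~ connect r' x y -> #|components U r| < #|components U r'|.
Proof.
move=> rsym sub_r'r xU yU rxy r'xy.
rewrite (components_subrel U sub_r'r) ltn_neqAle leq_imset_card andbT.
apply/negP => /imset_injP inj.
have /setP/(_ y) : [set z | connect r' x z] = [set z | connect r' y z].
  apply: inj; rewrite ?imset_f // !saturate_class //.
  by apply/setP => z; rewrite !inE; apply/idP/idP;
    apply: connect_trans; rewrite // rsym.
by rewrite !inE connect0 (negbTE r'xy).
Qed.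

Lemma trivIset_components U r : connect_sym r -> trivIset (components U r).
Proof.
move=> rsym; apply/trivIsetP => _ _ /imsetP[a _ ->] /imsetP[b _ ->].
apply: contraNT; rewrite -setI_eq0 => /set0Pn[z]; rewrite !inE => /andP[az bz].
apply/eqP/setP => y; rewrite !inE; apply/idP/idP => [ay | by_].
  by apply: connect_trans bz (connect_trans _ ay); rewrite rsym.
by apply: connect_trans az (connect_trans _ by_); rewrite rsym.
Qed.

Lemma card_adj_lt_component r x :
  irreflexive r -> #|[set y | r x y]| < #|[set y | connect r x y]|.
Proof.
move=> rirr; rewrite (cardsD1 x [set y | connect r x y]) inE connect0 add1n ltnS.
apply/subset_leq_card/subsetP => y; rewrite !inE => rxy.
by rewrite connect1 // andbT; apply: contraTneq rxy => ->; rewrite rirr.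
Qed.

End Components.

Lemma eq_ncomp (T : finType) (r r' : rel T) :
  connect r =2 connect r' -> ncomp r = ncomp r'.
Proof.
move=> eq_rr'; rewrite /ncomp.
have -> // : [set [set y | connect r x y] | x : T] = [set [set y | connect r' x y] | x : T].
by apply: eq_imset => x; apply/setP => y; rewrite !inE eq_rr'.
Qed.

Definition del_edges (T : finType) (e : rel T) (A : {set {set T}}) : rel T :=
  fun u v => e u v && ([set u; v] \notin A).

Section Bridges.
Variables (T : finType) (e : rel T).
Hypothesis esym : symmetric e.

Lemma del_edge_sym x y : symmetric (del_edge e x y).
Proof. by move=> u v; rewrite /del_edge esym setUC. Qed.

Lemma del_edges_sym A : symmetric (del_edges e A).
Proof. by move=> u v; rewrite /del_edges esym setUC. Qed.

Lemma bridge_disconnects x y : is_bridge e x y -> ~~ connect (del_edge e x y) x y.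
Proof.
case/andP => _; apply: contraL => cxy; rewrite -leqNgt.
suff /eq_ncomp -> : connect e =2 connect (del_edge e x y) by [].
move=> u v; apply/idP/idP; apply: connect_sub => a b; last first.
  by case/andP => eab _; apply: connect1.
move=> eab; have [/eqP ab_xy | ab_xy] := boolP ([set a; b] == [set x; y]); last first.
  by apply: connect1; rewrite /del_edge eab ab_xy.
have: a \in [set x; y] by rewrite -ab_xy set21.
have: b \in [set x; y] by rewrite -ab_xy set22.
rewrite !inE => /orP[] /eqP -> /orP[] /eqP ->;
  by rewrite ?connect0 // (sym_connect_sym (del_edge_sym x y)).
Qed.

Lemma card_components_del_bridges (U : {set T}) (A : {set {set T}}) :
  {in A, forall S, exists x y, S = [set x; y] /\ is_bridge e x y} ->
  cover A \subset U ->
  #|components U e| + #|A| <= #|components U (del_edges e A)|.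
Proof.
have [k] := ubnP #|A|; elim: k A => // k IHk A cardA bridgesA AU.
have [-> | [s sA]] := set_0Vmem A.
  by rewrite cards0 addn0; apply: leq_card_components => u v /andP[].
have [x [y [defs bxy]]] := bridgesA s sA.
have /IHk IH : #|A :\ s| < k by rewrite (cardsD1 s A) sA in cardA.
rewrite (cardsD1 s A) sA addnCA add1n; apply: leq_ltn_trans (IH _ _) _.
- by move=> S /setD1P[_ /bridgesA].
- apply: subset_trans AU; apply/bigcupsP => S /setD1P[_ SA].
  exact: bigcup_sup.
have sU : s \subset U by apply: subset_trans AU; apply: bigcup_sup.
apply: (ltn_card_components (x := x) (y := y)).
- exact: sym_connect_sym (del_edges_sym _).
- move=> u v /andP[euv uvA]; rewrite /del_edges euv.
  by apply: contra uvA => /setD1P[].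
- by apply: (subsetP sU); rewrite defs set21.
- by apply: (subsetP sU); rewrite defs set22.
- by apply: connect1; rewrite /del_edges -defs setD11 andbT; case/andP: bxy.
apply: contra (bridge_disconnects bxy); apply: connect_sub => u v /andP[euv uvA].
by apply: connect1; rewrite /del_edge euv; apply: contraNneq uvA => ->; rewrite -defs.
Qed.

End Bridges.

Section Incidence.
Variable T : finType.
Implicit Types (B : {set {set T}}) (w : T).

Definition incident B w : {set {set T}} := [set S in B | w \in S].

Lemma sum_card_incident B : \sum_w #|incident B w| = \sum_(S in B) #|S|.
Proof.
have card_incident w : #|incident B w| = \sum_(S in B) (w \in S).
  rewrite -sum1_card (eq_bigl (fun S => (S \in B) && (w \in S))) => [|S]; last first.
    by rewrite inE.
  by rewrite big_mkcondr; apply: eq_bigr => S _; case: (w \in S).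
under eq_bigr => w _ do rewrite card_incident.
rewrite exchange_big; apply: eq_bigr => S _.
by rewrite -sum1_card [RHS]big_mkcond.
Qed.

Lemma deg_le_del_edges (e : rel T) B w : irreflexive e ->
  deg e w <= #|[set z | del_edges e B w z]| + #|incident B w|.
Proof.
move=> eirr; set N := [set z | e w z & [set w; z] \in B].
have le_N : #|N| <= #|incident B w|.
  rewrite -(@card_in_imset _ _ (fun z => [set w; z])); last first.
    move=> z1 z2; rewrite !inE => /andP[ewz1 _] /andP[ewz2 _] eq12.
    have : z1 \in [set w; z2] by rewrite -eq12 set22.
    by rewrite !inE => /orP[/eqP z1w | /eqP //]; rewrite z1w eirr in ewz1.
  apply/subset_leq_card/subsetP => S /imsetP[z]; rewrite !inE => /andP[_ wzB] ->.
  by rewrite wzB set21.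
apply: leq_trans (leq_add (leqnn _) le_N); apply: leq_trans (leq_card_setU _ _).
apply/subset_leq_card/subsetP => z; rewrite !inE /del_edges.
by case: (e w z) => //=; case: ([set w; z] \in B).
Qed.

End Incidence.

Lemma leq_four_weight (c a k D : nat) :
  2 <= c -> c.+2 <= a + k -> 0 < k <= D -> 4 * c <= 4 * a + c * D.
Proof.
move=> c2 cak /andP[k0 kD]; have [k_ge4 | k_le3] := leqP 4 k.
  have D_ge4 : 4 <= D by apply: leq_trans kD.
  nia.
nia.
Qed.

Section BigBridges.
Variables (T : finType) (e : rel T) (c : nat).
Hypotheses (esym : symmetric e) (eirr : irreflexive e).

Local Notation B := (big_bridges e c).
Local Notation H := (del_edges e (big_bridges e c)).

Lemma mem_big_bridges S : S \in B ->
  exists x y, [/\ S = [set x; y], is_bridge e x y, c < deg e x & c < deg e y].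
Proof. by rewrite inE => /existsP[x /existsP[y /and4P[/eqP -> ? ? ?]]]; exists x, y. Qed.

Lemma deg_cover_big_bridges w : w \in cover B -> c < deg e w.
Proof.
case/bigcupP => _ /mem_big_bridges[x [y [-> _ dx dy]]].
by rewrite !inE => /orP[] /eqP ->.
Qed.

Lemma card_big_bridges_le_components : #|B| <= #|components (cover B) H|.
Proof.
apply: leq_trans (leq_addl _ _) (card_components_del_bridges esym _ (subxx _)).
by move=> S /mem_big_bridges[x [y [-> bxy _ _]]]; exists x, y.
Qed.

Lemma sum_card_incident_big_bridges : \sum_w #|incident B w| <= 2 * #|B|.
Proof.
rewrite sum_card_incident mulnC -sum_nat_const; apply: leq_sum => S.
by case/mem_big_bridges => x [y [-> _ _ _]]; rewrite cards2; case: (x != y).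
Qed.

Lemma component_weight C : 2 <= c -> C \in components (cover B) H ->
  4 * c <= 4 * #|C| + c * \sum_(v in C) #|incident B v|.
Proof.
move=> c2 /imsetP[w wB ->]; apply: (leq_four_weight (k := #|incident B w|) c2).
- have Hirr : irreflexive H by move=> x; rewrite /del_edges eirr.
  have := deg_le_del_edges B w eirr; have := card_adj_lt_component w Hirr.
  have := deg_cover_big_bridges wB; lia.
apply/andP; split.
  rewrite card_gt0; apply/set0Pn; case/bigcupP: wB => S SB wS.
  by exists S; rewrite inE SB.
by rewrite (bigD1 w) ?leq_addr // inE connect0.
Qed.

Lemma big_bridges_nat_bound : 2 <= c -> c * #|B| <= 2 * #|T|.
Proof.
move=> c2; set P := components (cover B) H.
have trivP : trivIset P.
  exact/trivIset_components/sym_connect_sym/del_edges_sym.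
have sum_card : \sum_(C in P) #|C| <= #|T| by rewrite (eqP trivP) max_card.
have sum_incident : \sum_(C in P) \sum_(v in C) #|incident B v| <= 2 * #|B|.
  rewrite -big_trivIset //; apply: leq_trans sum_card_incident_big_bridges.
  by rewrite [leqRHS](bigID [in cover P]) leq_addr.
have weights : #|P| * (4 * c) <=
    4 * \sum_(C in P) #|C| + c * \sum_(C in P) \sum_(v in C) #|incident B v|.
  rewrite -sum_nat_const !big_distrr -big_split; apply: leq_sum => C PC.
  exact: component_weight.
have le_BP : c * #|B| <= c * #|P|.
  by rewrite leq_mul2l card_big_bridges_le_components orbT.
have le_incident : c * \sum_(C in P) \sum_(v in C) #|incident B v| <= c * (2 * #|B|).
  by rewrite leq_mul2l sum_incident orbT.
lia.
Qed.

End BigBridges.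

Local Open Scope ring_scope.

Theorem lemma9p2 (T : finType) (e : rel T) (n c : nat) :
  symmetric e -> irreflexive e -> #|T| = n -> (2 <= c)%N ->
  (#|big_bridges e c|%:R : rat) <= (2 * n)%:R / c%:R.
Proof.
move=> esym eirr <- c2; have c_gt0 : (0 < c)%N by apply: leq_trans c2.
rewrite ler_pdivlMr ?ltr0n // -natrM ler_nat mulnC.
exact: big_bridges_nat_bound.
Qed.
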